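(* Let $b\ge 0$ and $h\ge 2b+1$ be integers, let $H$ be a set of $h$ vertices, and fix $\beta>0$. Let $M^1,M^2,M^3$ be any three transition matrices (as defined in the context). Then the product $M^1M^2M^3$ is a scrambling matrix, i.e. it has at least one column all of whose entries are strictly positive.
   Context: A reduced graph on $H$ is a directed graph obtained from the complete directed graph (without self-loops) on $H$ by deleting, for each vertex, an arbitrary set of $b$ of its incoming edges. A transition matrix is an $h\times h$ row-stochastic matrix $M$ with nonnegative real entries, rows and columns indexed by $H$, for which there is a reduced graph $R$ on $H$ such that $M_{ij}\ge\beta$ whenever $j=i$ or $(j,i)$ is an edge of $R$. (This models one phase of $D$ iterations of the Relay-IABC protocol: honest node $i$'s new state is a weighted combination, with weights at least $\beta$, of its own state and the states of its in-neighbors in the reduced graph remaining after trimming.) *)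

From mathcomp Require Import all_boot all_order all_algebra.
From mathcomp Require Import reals.
Set Implicit Arguments. Unset Strict Implicit. Unset Printing Implicit Defensive.
Import Order.TTheory GRing.Theory Num.Theory.
Local Open Scope ring_scope.

(* A reduced graph on H = 'I_h (with parameter b) is described by, for each
   vertex i, the set D i of in-neighbours whose edges (j,i) are deleted from
   the complete directed graph without self-loops. *)
Definition reduced_deletion (h b : nat) (D : 'I_h -> {set 'I_h}) : Prop :=
  forall i : 'I_h, #|D i| = b /\ i \notin D i.

Definition reduced_edge (h : nat) (D : 'I_h -> {set 'I_h}) (j i : 'I_h) : bool :=
  (j != i) && (j \notin D i).

Definition row_stochastic (R : realType) (h : nat) (M : 'M[R]_h) : Prop :=
  (forall i j, 0 <= M i j) /\ (forall i, \sum_(j < h) M i j = 1).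

Definition transition_matrix (R : realType) (h b : nat) (beta : R)
    (M : 'M[R]_h) : Prop :=
  row_stochastic M /\
  exists D : 'I_h -> {set 'I_h}, reduced_deletion b D /\
    forall i j : 'I_h, (j == i) || reduced_edge D j i -> beta <= M i j.

Definition scrambling (R : realType) (h : nat) (M : 'M[R]_h) : Prop :=
  exists j : 'I_h, forall i : 'I_h, 0 < M i j.

From mathcomp Require Import all_boot all_order all_algebra.
From mathcomp Require Import reals.
From mathcomp Require Import zify.
Set Implicit Arguments. Unset Strict Implicit. Unset Printing Implicit Defensive.
Import Order.TTheory GRing.Theory Num.Theory.
Local Open Scope ring_scope.

(* Let D_i be the b deleted in-neighbours of i in a reduced graph, so that
   M i j >= beta whenever j \notin D_i.  Each vertex is deleted b times in
   total, so by averaging some vertex k is kept by at least h - b vertices l;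
   these l have M3 l k >= beta.  For every j the h - b vertices l with
   M2 j l >= beta must meet them, since 2 (h - b) > h; hence column k of
   M2 M3 is positive.  Finally M1 has a positive diagonal, so it preserves a
   positive column of a nonnegative matrix. *)

Section NonnegativeMatrices.
Variable R : numDomainType.

Lemma mulmx_ge0 m n p (A : 'M[R]_(m, n)) (B : 'M[R]_(n, p)) :
  (forall i j, 0 <= A i j) -> (forall j k, 0 <= B j k) ->
  forall i k, 0 <= (A *m B) i k.
Proof.
by move=> A0 B0 i k; rewrite mxE; apply: sumr_ge0 => j _; apply: mulr_ge0.
Qed.

Lemma mulmx_gt0 m n p (A : 'M[R]_(m, n)) (B : 'M[R]_(n, p)) i j k :
  (forall i j, 0 <= A i j) -> (forall j k, 0 <= B j k) ->
  0 < A i j -> 0 < B j k -> 0 < (A *m B) i k.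
Proof.
move=> A0 B0 Aij Bjk; rewrite mxE (bigD1 j) //=.
by rewrite ltr_pwDl ?mulr_gt0 // sumr_ge0 // => l _; apply: mulr_ge0.
Qed.

End NonnegativeMatrices.

Lemma scrambling_mull (R : realType) n (A B : 'M[R]_n) :
  (forall i j, 0 <= A i j) -> (forall j k, 0 <= B j k) ->
  (forall i, exists j, 0 < A i j) ->
  scrambling B -> scrambling (A *m B).
Proof.
move=> A0 B0 Apos [k Bk]; exists k => i.
by have [j Aij] := Apos i; apply: (mulmx_gt0 A0 B0 Aij).
Qed.

Section Counting.
Variable T : finType.

Lemma double_counting (r : rel T) :
  (\sum_x #|[set y | r x y]| = \sum_y #|[set x | r x y]|)%N.
Proof.
have card_row (P : pred T) : #|[set y | P y]| = (\sum_y P y)%N.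
  by rewrite -sum1dep_card big_mkcond /=; apply: eq_bigr => y _; case: (P y).
rewrite (eq_bigr _ (fun x _ => card_row (r x))).
by rewrite exchange_big; apply: eq_bigr => y _; rewrite card_row.
Qed.

Lemma exists_ge_mean (F : T -> nat) :
  (0 < #|T|)%N -> exists k, (\sum_i F i <= #|T| * F k)%N.
Proof.
case/card_gt0P => i0 _; exists [arg max_(k > i0) F k].
case: arg_maxnP => // k _ Fk_max.
by rewrite -sum_nat_const; apply: leq_sum => i _; apply: Fk_max.
Qed.

Lemma large_sets_meet (A B : {set T}) :
  (#|T| < #|A| + #|B|)%N -> exists2 x, x \in A & x \in B.
Proof.
move=> AB_big; have : (0 < #|A :&: B|)%N.
  by have := cardsUI A B; have := max_card (A :|: B); lia.
by case/card_gt0P => x; rewrite inE => /andP[]; exists x.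
Qed.

Definition closed_out_nbhd (D : T -> {set T}) (k : T) : {set T} :=
  [set l | k \notin D l].

Lemma exists_large_closed_out_nbhd (b : nat) (D : T -> {set T}) :
  (0 < #|T|)%N -> (forall l, #|D l| = b) ->
  exists k, (#|T| - b <= #|closed_out_nbhd D k|)%N.
Proof.
move=> T_gt0 Db.
have [k le_mean] := exists_ge_mean (fun k => #|closed_out_nbhd D k|) T_gt0.
exists k; rewrite -(leq_pmul2l T_gt0) (leq_trans _ le_mean) //.
rewrite (double_counting (fun k l => k \notin D l)) -sum_nat_const.
apply/eq_leq/eq_bigr => l _; rewrite -(cardsC (D l)) Db addKn.
by apply: eq_card => x; rewrite !inE.
Qed.

End Counting.

Lemma transition_matrix_bounds (R : realType) h b (beta : R) (M : 'M[R]_h) :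
  transition_matrix b beta M ->
  (forall i j, 0 <= M i j) /\
  exists D : 'I_h -> {set 'I_h}, (forall i, #|D i| = b) /\
    forall i j, j \notin D i -> beta <= M i j.
Proof.
move=> [[M0 _] [D [HD Mbeta]]]; split=> //; exists D; split=> [i|i j jDi].
  by have [] := HD i.
apply: Mbeta; case: eqP => [//|/eqP ji].
by rewrite /reduced_edge ji.
Qed.

Lemma transition_diag_gt0 (R : realType) h b (beta : R) (M : 'M[R]_h) i :
  0 < beta -> transition_matrix b beta M -> 0 < M i i.
Proof.
move=> beta_gt0 [_ [D [_ Mbeta]]].
by apply: lt_le_trans beta_gt0 _; apply: Mbeta; rewrite eqxx.
Qed.

Lemma scrambling_mulmx_transition (R : realType) b h (beta : R)
    (M2 M3 : 'M[R]_h) :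
  (2 * b + 1 <= h)%N -> 0 < beta ->
  transition_matrix b beta M2 -> transition_matrix b beta M3 ->
  scrambling (M2 *m M3).
Proof.
move=> hb beta_gt0 /transition_matrix_bounds[M2_ge0 [D2 [D2b M2beta]]].
move=> /transition_matrix_bounds[M3_ge0 [D3 [D3b M3beta]]].
have h_gt0 : (0 < #|'I_h|)%N by rewrite card_ord; lia.
have [k large_k] := exists_large_closed_out_nbhd h_gt0 D3b.
exists k => j.
have [l ljD2 klD3] : exists2 l, l \in ~: D2 j & l \in closed_out_nbhd D3 k.
  apply: large_sets_meet; rewrite cardsCs setCK D2b.
  by apply: leq_trans (leq_add (leqnn _) large_k); rewrite card_ord; lia.
apply: (mulmx_gt0 M2_ge0 M3_ge0 (j := l)); apply: lt_le_trans beta_gt0 _.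
- by apply: M2beta; rewrite inE in ljD2.
- by apply: M3beta; rewrite inE in klD3.
Qed.

Theorem theorem2 (R : realType) (b h : nat) (beta : R)
    (M1 M2 M3 : 'M[R]_h) :
  (2 * b + 1 <= h)%N -> 0 < beta ->
  transition_matrix b beta M1 ->
  transition_matrix b beta M2 ->
  transition_matrix b beta M3 ->
  scrambling (M1 *m M2 *m M3).
Proof.
move=> hb beta_gt0 TM1 TM2 TM3; rewrite -mulmxA.
have [M1_ge0 _] := transition_matrix_bounds TM1.
have [M2_ge0 _] := transition_matrix_bounds TM2.
have [M3_ge0 _] := transition_matrix_bounds TM3.
apply: scrambling_mull => //.
- exact: mulmx_ge0.
- by move=> i; exists i; apply: transition_diag_gt0 TM1.
- exact: scrambling_mulmx_transition TM2 TM3.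
Qed.
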